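(* There is an absolute constant $c$ such that for every graph $G$ with $|V(G)|=2^k$ ($|V(G)|\ge2$) and bijective encoding $\mathrm{enc}:V(G)\to\{0,1\}^k$, $\mathrm{opt}(R[G])\le c\,|V(G)|^2\log|V(G)|$.
   Context: $R[G]=(P,N)$ with $P=\{\mathrm{enc}(u)1\mathrm{enc}(u)^R:u\in V(G)\}$, $N=\{\mathrm{enc}(u)1\mathrm{enc}(v)^R:uv\in E(G)\}$ ($x^R$ = reversal). $\mathrm{opt}(\cdot)$ is the minimum number of states of a canonical DFA consistent with the samples: a DFA over $\{0,1\}$ with possibly partial transition function (undefined runs reject) whose states are partitioned into layers $L_0=\{q_0\},\dots,L_\ell$ with every transition going from some $L_t$ to $L_{t+1}$ and all accepting states in $L_\ell$. *)

From mathcomp Require Import all_boot.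
Set Implicit Arguments. Unset Strict Implicit. Unset Printing Implicit Defensive.

(* Words over {0,1} are seq bool, with 0 = false and 1 = true. *)

Record LDFA := {
  nst : nat;
  q0 : 'I_nst;
  delta : 'I_nst -> bool -> option 'I_nst;
  acc : pred 'I_nst;
  lay : 'I_nst -> nat;
  depth : nat
}.

Definition canonical (A : LDFA) : Prop :=
  [/\ lay (q0 A) = 0,
      (forall q, lay q = 0 -> q = q0 A),
      (forall q : 'I_(nst A), lay q <= depth A),
      (forall (q : 'I_(nst A)) b q', delta q b = Some q' -> lay q' = (lay q).+1)
    & (forall q : 'I_(nst A), acc q -> lay q = depth A)].

(* run; an undefined transition rejects *)
Definition run (A : LDFA) (w : seq bool) : option 'I_(nst A) :=
  foldl (fun oq b => if oq is Some q then delta q b else None) (Some (q0 A)) w.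

Definition accepts (A : LDFA) (w : seq bool) : bool :=
  if run A w is Some q then acc q else false.

Definition posR (V : Type) (k : nat) (enc : V -> k.-tuple bool) (u : V) : seq bool :=
  enc u ++ true :: rev (enc u).
Definition negR (V : Type) (k : nat) (enc : V -> k.-tuple bool) (u v : V) : seq bool :=
  enc u ++ true :: rev (enc v).

Definition consistent_RG (V : finType) (e : rel V) (k : nat)
    (enc : V -> k.-tuple bool) (A : LDFA) : Prop :=
  (forall u, accepts A (posR enc u)) /\
  (forall u v, e u v -> ~~ accepts A (negR enc u v)).

From mathcomp Require Import all_boot.
From mathcomp Require Import zify.

Set Implicit Arguments.
Unset Strict Implicit.
Unset Printing Implicit Defensive.

(* Since enc is injective, a negative word enc(u) 1 enc(v)^R has u <> v and is
   therefore not of the form x 1 x^R.  So it suffices to recognise the language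
   { x 1 x^R : |x| = k } by a layered DFA: read x into a k-bit counter, read the
   separator 1, then compare the remaining bits with the counter, least
   significant bit first.  This uses (2k + 2) 2^k = O(n log n) states, far
   below the required c n^2 log n. *)

Section LayeredAutomaton.

(* Indices decoding to
   pairs outside [good] are unreachable and are placed in the last layer. *)
Variables (d B : nat) (good : pred (nat * nat)).
Variable step : nat * nat -> bool -> option (nat * nat).

Hypothesis good_bounded : forall t m, good (t, m) -> t <= d /\ m < B.
Hypothesis good_start : good (0, 0).
Hypothesis good_layer0 : forall m, good (0, m) -> m = 0.
Hypothesis step_good : forall p b q,
  good p -> step p b = Some q -> good q /\ q.1 = p.1.+1.
Hypothesis depth_gt0 : 0 < d.

Fixpoint srun (p : nat * nat) (w : seq bool) : option (nat * nat) :=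
  if w is b :: w' then obind (srun^~ w') (step p b) else Some p.

Lemma srun_cat p x y : srun p (x ++ y) = obind (srun^~ y) (srun p x).
Proof. by elim: x p => [|b x IHx] p //=; case: (step p b). Qed.

Lemma srun_good p w q :
  good p -> srun p w = Some q -> good q /\ q.1 = p.1 + size w.
Proof.
elim: w p => [|b w IHw] p gp /=; first by move=> [<-]; rewrite addn0.
case sp: (step p b) => [p'|] //=.
have [gp' layer_p'] := step_good gp sp.
by move=> /(IHw _ gp') [gq ->]; rewrite layer_p' addSnnS.
Qed.

Lemma states_gt0 : 0 < d.+1 * B.
Proof. by rewrite muln_gt0 /= (good_bounded good_start).2. Qed.

Definition decode (i : nat) : nat * nat := (i %/ B, i %% B).
Definition encode (p : nat * nat) : option 'I_(d.+1 * B) :=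
  insub (p.1 * B + p.2).

Lemma encode_good p : good p -> exists2 i, encode p = Some i & decode i = p.
Proof.
case: p => t m /[dup] /good_bounded [le_td lt_mB] _.
have lt_code : t * B + m < d.+1 * B by nia.
exists (Ordinal lt_code); first by rewrite /encode insubT.
rewrite /decode /= divnMDl ?divn_small ?addn0 ?modnMDl ?modn_small //.
exact: leq_ltn_trans lt_mB.
Qed.

Lemma decodeK (i : 'I_(d.+1 * B)) : encode (decode i) = Some i.
Proof. by rewrite /encode /= -divn_eq valK. Qed.

Definition state_layer (p : nat * nat) : nat := if good p then p.1 else d.
Definition final_state (p : nat * nat) : bool := good p && (p.1 == d).

Lemma state_layer_le p : state_layer p <= d.
Proof.
by case: p => t m; rewrite /state_layer; case: ifP => // /good_bounded [].
Qed.

Lemma state_layer0 p : state_layer p = 0 -> p = (0, 0).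
Proof.
rewrite /state_layer; case: p => t m /=; case: ifP => [gp t0 | _]; last by lia.
by move: gp; rewrite t0 => /good_layer0 ->.
Qed.

Lemma state_layer_step p b q :
  good p -> step p b = Some q -> state_layer q = (state_layer p).+1.
Proof.
by move=> gp /(step_good gp) [gq layer_q]; rewrite /state_layer gp gq layer_q.
Qed.

Lemma final_state_layer p : final_state p -> state_layer p = d.
Proof. by rewrite /state_layer => /andP [-> /eqP]. Qed.

Definition layered_dfa : LDFA := {|
  nst := d.+1 * B;
  q0 := Ordinal states_gt0;
  delta := fun i b => if good (decode i) then obind encode (step (decode i) b)
                      else None;
  acc := fun i => final_state (decode i);
  lay := fun i => state_layer (decode i);
  depth := d |}.

Lemma decode_q0 : decode (q0 layered_dfa) = (0, 0).
Proof. by rewrite /decode div0n mod0n. Qed.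

Lemma layered_dfa_canonical : canonical layered_dfa.
Proof.
split=> /=.
- by rewrite decode_q0 /state_layer good_start.
- move=> i /state_layer0 [div_i mod_i]; apply: val_inj.
  by rewrite /= (divn_eq i B) div_i mod_i.
- by move=> i; apply: state_layer_le.
- move=> i b j; case: ifP => // gi; case si: (step _ b) => [p|] //= ep.
  have [gp _] := step_good gi si.
  have [j' ej' dj'] := encode_good gp.
  move: ep; rewrite ej' => -[<-].
  by rewrite dj'; apply: state_layer_step si.
- by move=> i; apply: final_state_layer.
Qed.

Lemma run_layered_dfa_from (i : 'I_(nst layered_dfa)) p w :
  good p -> decode i = p ->
  foldl (fun oq b => if oq is Some q then delta q b else None) (Some i) w
  = obind encode (srun p w).
Proof.
elim: w i p => [|b w IHw] i p gp di /=; first by rewrite -di decodeK.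
rewrite di gp.
case sp: (step p b) => [p'|] /=; last by elim: w {IHw}.
have [gp' _] := step_good gp sp.
have [j -> dj] := encode_good gp'.
exact: IHw.
Qed.

Lemma accepts_layered_dfa w :
  size w = d -> accepts layered_dfa w = isSome (srun (0, 0) w).
Proof.
move=> size_w.
rewrite /accepts /run (run_layered_dfa_from w good_start decode_q0).
case sw: (srun _ w) => [q|] //=.
have [gq layer_q] := srun_good good_start sw.
have [i -> di] := encode_good gq.
by rewrite /= di /final_state gq layer_q size_w eqxx.
Qed.

End LayeredAutomaton.

Definition shift_in (m : nat) (b : bool) : nat := b + m.*2.

Fixpoint low_bits (n m : nat) : seq bool :=
  if n is n'.+1 then odd m :: low_bits n' m./2 else [::].

Lemma low_bits_shift_in m x : low_bits (size x) (foldl shift_in m x) = rev x.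
Proof.
elim/last_ind: x => [|x b IHx] //.
rewrite foldl_rcons size_rcons rev_rcons /= /shift_in half_bit_double IHx.
by rewrite oddD odd_double addbF; case: b.
Qed.

Section Palindromes.

Variable k : nat.

Definition pal_good (p : nat * nat) : bool :=
  (p.1 <= (2 * k).+1) && (p.2 < 2 ^ minn p.1 k).

Definition pal_step (p : nat * nat) (b : bool) : option (nat * nat) :=
  let: (t, m) := p in
  if t < k then Some (t.+1, shift_in m b)
  else if t == k then (if b then Some (k.+1, m) else None)
  else if t <= 2 * k then (if b == odd m then Some (t.+1, m./2) else None)
  else None.

Lemma pal_good_bounded t m : pal_good (t, m) -> t <= (2 * k).+1 /\ m < 2 ^ k.
Proof.
case/andP=> le_t lt_m; split=> //.
exact: leq_trans lt_m (leq_pexp2l _ (geq_minr _ _)).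
Qed.

Lemma pal_good_start : pal_good (0, 0).
Proof. by rewrite /pal_good min0n expn0. Qed.

Lemma pal_good_layer0 m : pal_good (0, m) -> m = 0.
Proof. by rewrite /pal_good /= min0n expn0; lia. Qed.

Lemma pal_step_good p b q :
  pal_good p -> pal_step p b = Some q -> pal_good q /\ q.1 = p.1.+1.
Proof.
case: p => t m /andP /= [le_t lt_m].
case: ltnP => [lt_tk|le_kt].
  move=> [<-]; split=> //; rewrite /pal_good /shift_in /=.
  move: lt_m; rewrite (minn_idPl (ltnW lt_tk)) (minn_idPl lt_tk) expnS.
  by case: b; lia.
rewrite (minn_idPr le_kt) in lt_m.
case: eqP => [->|_].
  case: b => // -[<-]; split=> //.
  by rewrite /pal_good /= (minn_idPr (leqnSn k)) lt_m; lia.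
case: ifP => // le_t2k; case: eqP => // _ [<-]; split=> //.
rewrite /pal_good /= (minn_idPr (leqW le_kt)); lia.
Qed.

Definition pal_dfa : LDFA :=
  layered_dfa pal_step pal_good_bounded pal_good_start.

Lemma pal_read t m x :
  t + size x <= k ->
  srun pal_step (t, m) x = Some (t + size x, foldl shift_in m x).
Proof.
elim: x t m => [|b x IHx] t m /=; first by rewrite addn0.
by move=> le_k; rewrite ifT /= ?IHx ?addSnnS //; lia.
Qed.

Lemma pal_check t m z : k < t -> t + size z <= (2 * k).+1 ->
  isSome (srun pal_step (t, m) z) = (z == low_bits (size z) m).
Proof.
elim: z t m => [|b z IHz] t m //= lt_kt le_t.
rewrite ltnNge ltnW //= gtn_eqF // ifT; last by lia.
rewrite eqseq_cons; case: eqP => //= _.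
by apply: IHz; lia.
Qed.

Lemma pal_dfa_accepts x y : size x = k -> size y = k ->
  accepts pal_dfa (x ++ true :: rev y) = (x == y).
Proof.
move=> size_x size_y.
have size_w : size (x ++ true :: rev y) = (2 * k).+1.
  by rewrite size_cat /= size_rev size_x size_y; lia.
rewrite (accepts_layered_dfa _ _ pal_step_good (ltn0Sn _) size_w).
rewrite srun_cat pal_read ?size_x // add0n /= ltnn eqxx.
rewrite pal_check ?size_rev ?size_y; [|lia|lia].
by rewrite -{1}size_x low_bits_shift_in (inj_eq (can_inj revK)) eq_sym.
Qed.

Lemma pal_dfa_canonical : canonical pal_dfa.
Proof.
apply: layered_dfa_canonical => //.
- exact: pal_good_layer0.
- exact: pal_step_good.
Qed.

Lemma pal_dfa_size : nst pal_dfa = (2 * k).+2 * 2 ^ k.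
Proof. by []. Qed.

End Palindromes.

Theorem mainTheorem8 :
  exists c : nat,
    forall (k : nat) (V : finType) (e : rel V),
      0 < k -> #|V| = 2 ^ k ->
      symmetric e -> irreflexive e ->
      forall enc : V -> k.-tuple bool, bijective enc ->
      exists A : LDFA,
        [/\ canonical A, consistent_RG e enc A
          & nst A <= c * #|V| ^ 2 * k].
Proof.
exists 4 => k V e k_gt0 card_V _ e_irr enc enc_bij.
exists (pal_dfa k); split.
- exact: pal_dfa_canonical.
- split=> [u|u v e_uv]; first by rewrite pal_dfa_accepts ?size_tuple.
  rewrite pal_dfa_accepts ?size_tuple //.
  apply/eqP=> /val_inj /(bij_inj enc_bij) eq_uv.
  by rewrite eq_uv e_irr in e_uv.
- rewrite pal_dfa_size card_V.
  have : 0 < 2 ^ k by rewrite expn_gt0.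
  move: (2 ^ k) => n n_gt0; nia.
Qed.
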